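(* Consider a $K\times N$ multicast switch with a traffic pattern having rational rate vector $\mathbf r$ and enhanced rate vector $\mathbf e$, where fanout splitting and linear network coding are allowed. The following are equivalent: (1) $\mathbf e\in STAB(G)$, where $G$ is the enhanced conflict graph; (2) there exist a coding scheme and a frame-based schedule with frame size $F$ such that for every flow $(i,J)$, $r_{iJ}F$ is an integer, and, for all $n\ge1$, the oldest $r_{iJ}F$ packets that were in the queue of flow $(i,J)$ at the end of frame $n-1$ are served by the end of frame $n$ (and if there were fewer than $r_{iJ}F$ packets, all of them are served).
   Context: Switch: inputs $[K]$, outputs $[N]$, slotted time. A flow is $(i,J)$ with input $i$ and nonempty fanout $J\subseteq[N]$, with rate $r_{iJ}$; each flow's packets arrive into a queue at input $i$ (queues start empty). Subflows: $(i,J,j)$, $j\in J$. A switch configuration for one slot: each input idles or picks one of its flows $(i,J)$ and connects to a subset of $J$, sending one packet to all connected outputs; each output is connected to at most one input. With linear network coding the packet sent for flow $(i,J)$ is a linear combination over a finite field of packets of that flow held at input $i$. A frame is a block of $F$ consecutive slots; a frame-based schedule is a fixed sequence of $F$ configurations repeated in every frame. A packet is served when it has been conveyed to (is decodable at) all outputs in the fanout of its flow and removed from the queue. Enhanced rate vector: $\mathbf e_{iJj}=r_{iJ}$. Enhanced conflict graph $G$: one vertex per subflow; distinct $(i,J,j),(i',J',j')$ adjacent iff $j=j'$, or $i=i'$ and $J\ne J'$. $STAB(G)$ is the convex hull of incidence vectors of stable sets of $G$. *)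

From HB Require Import structures.
From mathcomp Require Import all_boot all_order all_algebra.
Set Implicit Arguments. Unset Strict Implicit. Unset Printing Implicit Defensive.
Import Order.TTheory GRing.Theory Num.Theory.
Local Open Scope ring_scope.

Section Switch.
Variables K N : nat.

(* A subflow (i,J,j); only triples with J nonempty and j \in J are vertices. *)
Definition subflow := ('I_K * {set 'I_N} * 'I_N)%type.

Definition is_subflow (v : subflow) : bool :=
  let: (i, J, j) := v in (J != set0) && (j \in J).

Definition adjacent (v w : subflow) : bool :=
  let: (i, J, j) := v in let: (i', J', j') := w in
  (v != w) && ((j == j') || ((i == i') && (J != J'))).

Definition stable (S : {set subflow}) : bool :=
  [forall v in S, is_subflow v] && [forall v in S, forall w in S, ~~ adjacent v w].

Definition enhanced (r : 'I_K -> {set 'I_N} -> rat) (v : subflow) : rat :=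
  let: (i, J, j) := v in r i J.

Definition in_STAB (x : subflow -> rat) : Prop :=
  exists lam : {set subflow} -> rat,
    [/\ forall S, 0 <= lam S,
        forall S, lam S != 0 -> stable S,
        \sum_(S : {set subflow}) lam S = 1
      & forall v, is_subflow v -> x v = \sum_(S : {set subflow}) lam S * (v \in S)%:R].

(* A configuration: input i idles (None) or serves flow (i,J) and is
   connected to the output set T (Some (J,T)). *)
Definition config := 'I_K -> option ({set 'I_N} * {set 'I_N}).

Definition valid_config (c : config) : Prop :=
  (forall i J T, c i = Some (J, T) -> J != set0 /\ T \subset J) /\
  (forall i i' J T J' T', i != i' -> c i = Some (J, T) -> c i' = Some (J', T') ->
     [disjoint T & T']).

(* a i J s = number of packets of flow (i,J) arriving during slot s. *)
Definition arrivals := 'I_K -> {set 'I_N} -> nat -> nat.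

(* packets of flow (i,J) arrived in slots 0..t-1; packets are numbered
   0,1,2,... in order of arrival (smaller index = older). *)
Definition cumA (a : arrivals) (i : 'I_K) (J : {set 'I_N}) (t : nat) : nat := \sum_(s < t) a i J s.

Section Coding.
Variable Fld : finFieldType.

(* coding scheme: given the arrival process, the slot s and the input i,
   the coding vector (coefficients on the packets 0,1,2,... of the flow
   served by i in slot s) of the packet sent. *)
Definition coding := arrivals -> nat -> 'I_K -> nat -> Fld.

Definition causal (code : coding) : Prop :=
  forall a a' s, (forall i J s', (s' < s)%N -> a i J s' = a' i J s') ->
    code a s = code a' s.

Variables (F : nat) (sched : nat -> config) (code : coding) (a : arrivals).

Definition slot_cfg (s : nat) : config := sched (s %% F).

Definition recv (i : 'I_K) (J : {set 'I_N}) (j : 'I_N) (s : nat) : bool :=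
  match slot_cfg s i with
  | Some (J', T) => (J' == J) && (j \in T)
  | None => false
  end.

Definition decodable (i : 'I_K) (J : {set 'I_N}) (j : 'I_N) (k t : nat) : Prop :=
  exists w : nat -> Fld, forall m,
    \sum_(s < t | recv i J j s) w s * code a s i m = (m == k)%:R.

(* served by time t (end of slot t-1): decodable at every output of J *)
Definition served (i : 'I_K) (J : {set 'I_N}) (k t : nat) : Prop := forall j, j \in J -> decodable i J j k t.

Definition present (i : 'I_K) (J : {set 'I_N}) (k t : nat) : Prop := (k < cumA a i J t)%N /\ ~ served i J k t.

Definition valid_coding : Prop :=
  forall s i J T, slot_cfg s i = Some (J, T) ->
    forall m, code a s i m != 0 -> present i J m s.

(* The packet k is among
   the oldest r_{iJ}F iff the number of queued packets older than k is
   < r_{iJ}F. *)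
Definition frame_guarantee (r : 'I_K -> {set 'I_N} -> rat) : Prop :=
  forall n i J, (0 < n)%N -> J != set0 ->
  forall k (older : seq nat), uniq older ->
    (forall k', k' \in older <-> ((k' < k)%N /\ present i J k' (n.-1 * F))) ->
    present i J k (n.-1 * F) ->
    (size older)%:R < r i J * F%:R ->
    served i J k (n * F).

End Coding.
End Switch.

From HB Require Import structures.
From mathcomp Require Import all_boot all_order all_algebra.
From mathcomp Require Import ring zify.
From Stdlib Require Import ClassicalEpsilon FunctionalExtensionality.
Import Order.TTheory GRing.Theory Num.Theory.
Set Implicit Arguments. Unset Strict Implicit. Unset Printing Implicit Defensive.
Local Open Scope ring_scope.

(* (1) => (2): write the enhanced rate vector as a convex combination of stable
   sets with rational weights lam_S and let F be a common denominator.  A frame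
   lists each stable set S as a configuration lam_S F times, so every output j of
   J receives r_iJ F slots of flow (i,J) per frame.  In frame n, input i codes
   the oldest r_iJ F packets still queued at the start of the frame, giving the
   p-th of them the coefficient a_l^p in slot l, with distinct a_l in a prime
   field of size > F, and omitting packets already served.  Output j adds the
   served packets back and gets at least r_iJ F rows of an invertible
   Vandermonde system.
   (2) => (1): the frame average of the stable sets of subflows realised by the
   configurations is a point of STAB(G).  It dominates e: if output j of J got
   c < b = r_iJ F slots of (i,J) per frame, a burst of b^2 packets, of which the
   guarantee serves b per frame, would be decoded after b+1 frames from only
   (b+1)c < b^2 coded packets.  STAB(G) is closed under decreasing coordinates. *)

Definition asbool (P : Prop) : bool :=
  if excluded_middle_informative P then true else false.

Lemma asboolP (P : Prop) : reflect P (asbool P).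
Proof. by rewrite /asbool; case: excluded_middle_informative => h; constructor. Qed.

Lemma eq_asbool (P Q : Prop) : (P <-> Q) -> asbool P = asbool Q.
Proof. by move=> PQ; apply/asboolP/asboolP; rewrite PQ. Qed.

Section ReceivedSpan.
Variables (K N : nat) (Fld : finFieldType) (F : nat) (sched : nat -> config K N).
Variables (code : coding K N Fld) (a : arrivals K N).
Variables (i : 'I_K) (J : {set 'I_N}) (j : 'I_N).

Definition received_span (t : nat) (v : nat -> Fld) : Prop :=
  exists w : nat -> Fld, forall m,
    \sum_(s < t | recv F sched i J j s) w s * code a s i m = v m.

Lemma received_span_ext t v v' :
  (forall m, v m = v' m) -> received_span t v -> received_span t v'.
Proof. by move=> e [w hw]; exists w => m; rewrite hw e. Qed.

Lemma received_span0 t : received_span t (fun=> 0).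
Proof. by exists (fun=> 0) => m; rewrite big1 // => s _; rewrite mul0r. Qed.

Lemma received_spanD t v v' : received_span t v -> received_span t v' ->
  received_span t (fun m => v m + v' m).
Proof.
move=> [w hw] [w' hw']; exists (fun s => w s + w' s) => m.
by rewrite -hw -hw' -big_split; apply: eq_bigr => s _; rewrite mulrDl.
Qed.

Lemma received_spanZ t c v : received_span t v -> received_span t (fun m => c * v m).
Proof.
move=> [w hw]; exists (fun s => c * w s) => m.
by rewrite -hw mulr_sumr; apply: eq_bigr => s _; rewrite mulrA.
Qed.

Lemma received_span_sum t (X : eqType) (xs : seq X) (P : pred X) (f : X -> nat -> Fld) :
  (forall x, x \in xs -> P x -> received_span t (f x)) ->
  received_span t (fun m => \sum_(x <- xs | P x) f x m).
Proof.
elim: xs => [|x xs IH] fP.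
  by apply: received_span_ext (received_span0 t) => m; rewrite big_nil.
have {}IH := IH (fun y yxs => fP y (@mem_behead _ (x :: xs) y yxs)).
case Px: (P x).
  apply: received_span_ext (received_spanD (fP x (mem_head _ _) Px) IH) => m.
  by rewrite big_cons Px.
by apply: received_span_ext IH => m; rewrite big_cons Px.
Qed.

Lemma received_span_le t t' v : (t <= t')%N -> received_span t v -> received_span t' v.
Proof.
move=> le_tt' [w hw]; exists (fun s => if (s < t)%N then w s else 0) => m.
rewrite -hw (bigID (fun s : 'I_t' => (s < t)%N)) /= [X in _ + X]big1 ?addr0; last first.
  by move=> s /andP[_ /negbTE ->]; rewrite mul0r.
rewrite (big_ord_widen_cond _ _ (fun s => w s * code a s i m) le_tt').
by apply: eq_bigr => s /andP[_ ->].
Qed.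

Lemma received_span_code t s :
  (s < t)%N -> recv F sched i J j s -> received_span t (code a s i).
Proof.
move=> lt_st rs; exists (fun s' => (s' == s)%:R) => m.
rewrite (bigD1 (Ordinal lt_st)) //= eqxx mul1r big1 ?addr0 // => s' /andP[_ ne].
suff /negbTE -> : (s' : nat) != s by rewrite mul0r.
by apply: contra ne => /eqP e; apply/eqP/val_inj.
Qed.

(* Decoding D packets needs a D x D identity matrix as a product W *m C whose
   inner dimension is the number of received coded packets. *)
Lemma count_recv_ge_decodable t D :
  (forall k, (k < D)%N -> decodable F sched code a i J j k t) ->
  (D <= count (recv F sched i J j) (index_iota 0 t))%N.
Proof.
move=> dec.
pose rs := [seq s <- index_iota 0 t | recv F sched i J j s].
have [w hw] : exists w : 'I_D -> nat -> Fld, forall k : 'I_D, forall m,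
    \sum_(s < t | recv F sched i J j s) w k s * code a s i m = (m == k)%:R.
  by apply: (fin_all_exists (fun k : 'I_D => dec k (ltn_ord k))).
pose W : 'M[Fld]_(D, size rs) := \matrix_(k, y) w k (nth 0%N rs y).
pose C : 'M[Fld]_(size rs, D) := \matrix_(y, m) code a (nth 0%N rs y) i m.
have WC : W *m C = 1%:M.
  apply/matrixP => k m; have := hw k m.
  rewrite -(big_mkord _ (fun s => w k s * code a s i m)) -big_filter (big_nth 0%N).
  rewrite big_mkord -/rs !mxE eq_sym => <-.
  by apply: eq_bigr => y _; rewrite !mxE.
rewrite -size_filter -/rs -{1}(mxrank1 Fld D) -WC.
exact: leq_trans (mxrankM_maxl W C) (rank_leq_col W).
Qed.

End ReceivedSpan.

Section StableSets.
Variables K N : nat.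
Local Notation subflow := (subflow K N).

Lemma stableP (S : {set subflow}) :
  reflect ((forall v, v \in S -> is_subflow v) /\
           (forall v w, v \in S -> w \in S -> ~~ adjacent v w))
          (stable S).
Proof.
apply: (iffP andP) => [[/forallP h1 /forallP h2]|[h1 h2]]; split.
- by move=> v; apply/implyP.
- by move=> v w vS; move/implyP/(_ vS)/forallP/(_ w)/implyP: (h2 v).
- by apply/forallP => v; apply/implyP/h1.
- by apply/forallP => v; apply/implyP => vS; apply/forallP => w; apply/implyP; apply: h2.
Qed.

Lemma stable_subset (S S' : {set subflow}) : S \subset S' -> stable S' -> stable S.
Proof.
move=> /subsetP sSS' /stableP[h1 h2]; apply/stableP; split=> [v vS|v w vS wS].
  exact/h1/sSS'.
exact/h2/sSS'/wS/sSS'.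
Qed.

Definition stab_weights (lam : {set subflow} -> rat) (y : subflow -> rat) : Prop :=
  [/\ forall S, 0 <= lam S, forall S, lam S != 0 -> stable S,
      \sum_(S : {set subflow}) lam S = 1
    & forall v, is_subflow v -> y v = \sum_(S : {set subflow}) lam S * (v \in S)%:R].

Lemma stab_weights_ext lam y y' :
  (forall v, is_subflow v -> y v = y' v) -> stab_weights lam y -> stab_weights lam y'.
Proof. by move=> e [h1 h2 h3 h4]; split=> // v sv; rewrite -e // h4. Qed.

Lemma big_setU1_notin (v : subflow) (f : {set subflow} -> rat) :
  \sum_(S : {set subflow} | v \notin S) f (v |: S) = \sum_(S : {set subflow} | v \in S) f S.
Proof.
symmetry; rewrite (reindex_onto (fun S => v |: S) (fun S => S :\ v)) /=; last first.
  by move=> S vS; rewrite setD1K.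
apply: eq_bigl => S; rewrite setU11 /=; case vS: (v \in S).
  by apply/negbTE/eqP => e; move: vS; rewrite -e setD11.
by rewrite setU1K ?vS ?eqxx.
Qed.

(* Scales the coordinate [v] by [t]: a fraction [1 - t] of the weight of each
   [S] containing [v] is moved to [S :\ v]. *)
Definition shrink_weights (lam : {set subflow} -> rat) (v : subflow) (t : rat)
    (S : {set subflow}) : rat :=
  if v \in S then t * lam S else lam S + (1 - t) * lam (v |: S).

Lemma sum_shrink_weights lam v t (g : {set subflow} -> rat) :
  \sum_(S : {set subflow}) shrink_weights lam v t S * g S =
  t * \sum_(S : {set subflow} | v \in S) lam S * g S
  + \sum_(S : {set subflow} | v \notin S) lam S * g S
  + (1 - t) * \sum_(S : {set subflow} | v \in S) lam S * g (S :\ v).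
Proof.
rewrite (bigID (fun S : {set subflow} => v \in S)) /= -addrA; congr (_ + _).
  by rewrite mulr_sumr; apply: eq_bigr => S vS; rewrite /shrink_weights vS mulrA.
rewrite -(big_setU1_notin v (fun S => lam S * g (S :\ v))) mulr_sumr -big_split /=.
by apply: eq_bigr => S vS; rewrite /shrink_weights (negbTE vS) setU1K // mulrDl mulrA.
Qed.

Lemma sum_shrink_weights_setD1 lam v t (g : {set subflow} -> rat) :
  (forall S : {set subflow}, v \in S -> g (S :\ v) = g S) ->
  \sum_(S : {set subflow}) shrink_weights lam v t S * g S =
  \sum_(S : {set subflow}) lam S * g S.
Proof.
move=> gD1; rewrite sum_shrink_weights [RHS](bigID (fun S : {set subflow} => v \in S)) /=.
rewrite [X in _ + (1 - t) * X](eq_bigr (fun S : {set subflow} => lam S * g S)); last first.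
  by move=> S vS; rewrite gD1.
move: (\sum_(S : {set subflow} | v \in S) _) (\sum_(S : {set subflow} | v \notin S) _) => X Y.
ring.
Qed.

Lemma stab_weights_shrink lam y v t : stab_weights lam y -> 0 <= t <= 1 ->
  stab_weights (shrink_weights lam v t) (fun w => if w == v then t * y v else y w).
Proof.
move=> [h1 h2 h3 h4] /andP[t0 t1]; split.
- move=> S; rewrite /shrink_weights; case: ifP => _; first exact: mulr_ge0.
  by rewrite addr_ge0 // mulr_ge0 ?subr_ge0.
- move=> S; rewrite /shrink_weights; case: ifP => vS.
    by move=> nz; apply: h2; apply: contraNneq nz => ->; rewrite mulr0.
  have [->|] := eqVneq (lam S) 0; last by move=> ne _; exact: h2.
  rewrite add0r => nz; apply: (@stable_subset _ (v |: S)); first exact: subsetUr.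
  by apply: h2; apply: contraNneq nz => ->; rewrite mulr0.
- have := @sum_shrink_weights_setD1 lam v t (fun=> 1) (fun _ _ => erefl).
  move=> sum1; rewrite -h3; transitivity (\sum_S shrink_weights lam v t S * 1).
    by apply: eq_bigr => S _; rewrite mulr1.
  by rewrite sum1; apply: eq_bigr => S _; rewrite mulr1.

- move=> w; case: eqVneq => [->|nwv] sw; last first.
    by rewrite h4 // sum_shrink_weights_setD1 // => S vS; rewrite !inE nwv.
  rewrite sum_shrink_weights (h4 _ sw).
  rewrite [X in _ = _ + _ * X]big1; last by move=> S _; rewrite setD11 mulr0.
  rewrite [X in _ = _ + X + _]big1; last by move=> S vS; rewrite (negbTE vS) mulr0.
  rewrite mulr0 !addr0 [in LHS](bigID (fun S : {set subflow} => v \in S)) /=.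
  by rewrite [X in _ * (_ + X) = _]big1 ?addr0 // => S vS; rewrite (negbTE vS) mulr0.
Qed.

Lemma stab_weights_down_closed lam y (x : subflow -> rat) : stab_weights lam y ->
  (forall v, is_subflow v -> 0 <= x v <= y v) -> exists lam', stab_weights lam' x.
Proof.
move=> hl hx.
suff [lam' hl'] : exists lam',
    stab_weights lam' (fun v => if v \in enum [set: subflow] then x v else y v).
  by exists lam'; apply: stab_weights_ext hl' => v _; rewrite mem_enum inE.
elim: (enum [set: subflow]) (enum_uniq [set: subflow]) => [_|v vs IH /andP[vvs uvs]] /=.
  by exists lam; apply: stab_weights_ext hl.
have [lam1 h1] := IH uvs.
pose t := if is_subflow v then x v / y v else 1.
have t01 : 0 <= t <= 1.
  rewrite /t; case: ifP => sv //; have /andP[x0 xy] := hx v sv.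
  have [->|ny] := eqVneq (y v) 0; first by rewrite invr0 mulr0 lexx ler01.
  by rewrite divr_ge0 ?(le_trans x0) //= ler_pdivrMr ?mul1r // lt_def ny (le_trans x0).
exists (shrink_weights lam1 v t); apply: stab_weights_ext (stab_weights_shrink v h1 t01).
move=> w; rewrite in_cons; case: eqVneq => [->|] //= sv.
rewrite (negbTE vvs) /t sv; have /andP[x0 xy] := hx v sv.
have [y0|ny] := eqVneq (y v) 0; last by rewrite divfK.
by rewrite y0 mulr0; apply/eqP; rewrite eq_le x0 -y0 xy.
Qed.

End StableSets.

Lemma served_le K N (Fld : finFieldType) F (sched : nat -> config K N)
    (code : coding K N Fld) a i J k t t' :
  (t <= t')%N -> served F sched code a i J k t -> served F sched code a i J k t'.
Proof. by move=> le_tt' sv j jJ; exact: received_span_le le_tt' (sv j jJ). Qed.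

Lemma recv_modn K N F (sched : nat -> config K N) i J j s :
  recv F sched i J j s = recv F sched i J j (s %% F).
Proof. by rewrite /recv /slot_cfg modn_mod. Qed.

Lemma count_iota_periodic F (p : pred nat) n : (forall s, p s = p (s %% F)%N) ->
  count p (index_iota 0 (n * F)) = (n * count p (index_iota 0 F))%N.
Proof.
move=> pF; rewrite /index_iota !subn0; elim: n => [|n IH]; first by rewrite !mul0n.
rewrite mulSnr iotaD count_cat IH add0n mulSnr -[in iota (n * F)%N F](addn0 (n * F)%N).
rewrite iotaDl count_map; congr (_ + _)%N; apply: eq_count => x /=.
by rewrite pF modnMDl -pF.
Qed.

Section Necessity.
Variables (K N : nat) (r : 'I_K -> {set 'I_N} -> rat) (F : nat) (sched : nat -> config K N).
Variables (Fld : finFieldType) (code : coding K N Fld).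
Hypotheses (F_gt0 : (0 < F)%N) (sched_valid : forall s, (s < F)%N -> valid_config (sched s)).
Hypothesis guarantee : forall a, frame_guarantee F sched code a r.

Definition burst (i : 'I_K) (J : {set 'I_N}) (M : nat) : arrivals K N :=
  fun i' J' s => if [&& i' == i, J' == J & s == 0%N] then M else 0%N.

Lemma cumA_burst i J M t : (0 < t)%N -> cumA (burst i J M) i J t = M.
Proof.
by case: t => // t _; rewrite /cumA big_ord_recl /burst !eqxx big1_eq addn0.
Qed.

Lemma burst_served i J M b : J != set0 -> r i J * F%:R = b%:R ->
  forall m k, (k < M)%N -> (k < m * b)%N ->
  served F sched code (burst i J M) i J k (m.+1 * F).
Proof.
move=> J0 rb; elim=> [|m IH] k kM; first by rewrite mul0n.
move=> kmb; set a := burst i J M.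
have [sv|nsv] := asboolP (served F sched code a i J k (m.+1 * F)).
  by apply: served_le sv; rewrite leq_mul2r leqnSn orbT.
have pk : present F sched code a i J k (m.+1 * F).
  by split=> //; rewrite cumA_burst ?muln_gt0.
pose older := [seq k' <- iota 0 k | asbool (present F sched code a i J k' (m.+1 * F))].
have older_small : (size older <= k - m * b)%N.
  rewrite -(size_iota (m * b) (k - m * b)); apply: uniq_leq_size.
    by rewrite filter_uniq ?iota_uniq.
  move=> k'; rewrite mem_filter mem_iota /= => /andP[/asboolP[_ nsk'] lk'].
  rewrite mem_iota; apply/andP; split; last by lia.
  by rewrite leqNgt; apply/negP => lt; apply: nsk'; apply: IH => //; lia.
apply: (guarantee (n := m.+2)) (older) _ _ pk _ => //.
- by rewrite filter_uniq ?iota_uniq.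
- move=> k'; rewrite mem_filter mem_iota add0n /=.
  by split=> [/andP[/asboolP ? ?]|[? ?]] //; apply/andP; split=> //; apply/asboolP.
- by rewrite rb ltr_nat; move: kmb; rewrite mulSnr; nia.
Qed.

(* A burst of b^2 packets is decodable after b+1 frames; with c < b receptions
   per frame, output j would hold only (b+1)c < b^2 coded packets. *)
Lemma frame_recv_lb i J j b : J != set0 -> j \in J -> r i J * F%:R = b%:R ->
  (b <= count (recv F sched i J j) (index_iota 0 F))%N.
Proof.
move=> J0 jJ rb; rewrite leqNgt; apply/negP => lt_cb.
have dec k : (k < b * b)%N -> decodable F sched code (burst i J (b * b)) i J j k (b.+1 * F).
  by move=> kbb; exact: (burst_served J0 rb kbb kbb jJ).
have := count_recv_ge_decodable dec.
rewrite count_iota_periodic; last by move=> s; rewrite recv_modn.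
move: lt_cb; set c := count _ _; nia.
Qed.

Definition config_set (c : config K N) : {set subflow K N} :=
  [set v : subflow K N | let: (i, J, j) := v in
     if c i is Some (J', T) then (J' == J) && (j \in T) else false].

Lemma stable_config_set c : valid_config c -> stable (config_set c).
Proof.
case=> cJ cdisj; apply/stableP; split.
  move=> [[i J] j]; rewrite inE; case ci: (c i) => [[J' T]|] // /andP[/eqP <- jT].
  by have [J0 /subsetP TJ] := cJ _ _ _ ci; rewrite /is_subflow J0 TJ.
move=> [[i J] j] [[i' J'] j']; rewrite !inE.
case ci: (c i) => [[J1 T1]|] // /andP[/eqP <- jT1].
case ci': (c i') => [[J2 T2]|] // /andP[/eqP <- jT2].
rewrite /adjacent; have [ii'|ne] := eqVneq i i'.
  move: ci'; rewrite -ii' ci => -[<- _] /=; rewrite eqxx /= orbF.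
  by apply/negP => /andP[/eqP nv /eqP jj']; apply: nv; rewrite jj'.
rewrite /= orbF; apply/negP => /andP[_ /eqP jj'].
by move: jT2; rewrite -jj' (disjointFr (cdisj _ _ _ _ _ _ ne ci ci') jT1).
Qed.

Definition frame_weights (S : {set subflow K N}) : rat :=
  \sum_(l < F) (config_set (sched l) == S)%:R / F%:R.

Definition frame_marginal (v : subflow K N) : rat :=
  \sum_(l < F) (v \in config_set (sched l))%:R / F%:R.

Lemma stab_weights_frame : stab_weights frame_weights frame_marginal.
Proof.
have F0 : (F%:R : rat) != 0 by rewrite pnatr_eq0 -lt0n.
have sum_delta l (g : {set subflow K N} -> rat) :
    \sum_S (config_set (sched l) == S)%:R / F%:R * g S = g (config_set (sched l)) / F%:R.
  rewrite (bigD1 (config_set (sched l))) //= eqxx big1 ?addr0 ?mul1r 1?mulrC //.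
  by move=> S; rewrite eq_sym => /negbTE ->; rewrite !mul0r.
split.
- by move=> S; apply: sumr_ge0 => l _; apply: divr_ge0.
- move=> S nz; apply: contraNT nz => nstS; apply/eqP; apply: big1 => l _.
  have [eS|] := eqVneq (config_set (sched l)) S; last by rewrite mul0r.
  by case/negP: nstS; rewrite -eS; apply/stable_config_set/sched_valid.
- rewrite /frame_weights exchange_big /=.
  transitivity (\sum_(l < F) (F%:R)^-1 : rat).
    apply: eq_bigr => l _; rewrite -[RHS]mul1r -(sum_delta l (fun=> 1)).
    by apply: eq_bigr => S _; rewrite mulr1.
  by rewrite sumr_const card_ord -[_ *+ F]mulr_natr mulVf.
- move=> v _; rewrite /frame_marginal /frame_weights.
  under [RHS]eq_bigr do rewrite mulr_suml.
  by rewrite exchange_big; apply: eq_bigr => l _; rewrite sum_delta mulrC.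
Qed.

Lemma frame_marginalE i J j :
  frame_marginal (i, J, j) = (count (recv F sched i J j) (index_iota 0 F))%:R / F%:R.
Proof.
rewrite /frame_marginal -mulr_suml -sum1_count natr_sum big_mkord.
congr (_ / _); rewrite [RHS]big_mkcond; apply: eq_bigr => l _.
rewrite inE /recv /slot_cfg modn_small //.
by case: (sched l i) => [[? ?]|] //; case: (_ && _).
Qed.

Lemma frame_schedule_in_STAB :
  (forall i J, J != set0 -> 0 <= r i J) ->
  (forall i J, J != set0 -> exists b : nat, r i J * F%:R = b%:R) ->
  in_STAB (enhanced r).
Proof.
move=> r_ge0 r_int; apply: (stab_weights_down_closed stab_weights_frame).
move=> [[i J] j] /andP[J0 jJ] /=; rewrite r_ge0 //= frame_marginalE.
have [b rb] := r_int i J J0.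
by rewrite ler_pdivlMr ?ltr0n // rb ler_nat frame_recv_lb.
Qed.

End Necessity.

Lemma mulq_dvd_denq (q : rat) (F : nat) : 0 <= q -> (`|denq q| %| F)%N ->
  q * F%:R = (`|numq (q * F%:R)|%N)%:R.
Proof.
move=> q0 /dvdnP[c ->].
have -> : q * (c * `|denq q|)%N%:R = (numq q * c%:Z)%:~R.
  by rewrite natrM natr_absz normr_denq intrM mulrCA -numqE mulrC.
by rewrite numq_int natr_absz ger0_norm // mulr_ge0 // numq_ge0.
Qed.

Lemma dvdn_prod_factor (I : finType) (f : I -> nat) i : (f i %| \prod_j f j)%N.
Proof. by rewrite (bigD1 i) //= dvdn_mulr. Qed.

Section FrameFromWeights.
Variables (K N : nat) (r : 'I_K -> {set 'I_N} -> rat) (lam : {set subflow K N} -> rat).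
Hypotheses (lam_r : stab_weights lam (enhanced r))
           (r_ge0 : forall i J, J != set0 -> 0 <= r i J).
Local Notation subflow := (subflow K N).

Definition frame_len : nat :=
  (\prod_(S : {set subflow}) `|denq (lam S)| *
   \prod_(v : 'I_K * {set 'I_N}) `|denq (r v.1 v.2)|)%N.

Lemma frame_len_gt0 : (0 < frame_len)%N.
Proof. by rewrite muln_gt0 !prodn_gt0 // => ?; rewrite absz_gt0 denq_neq0. Qed.

Definition copies (S : {set subflow}) : nat := `|numq (lam S * frame_len%:R)|%N.
Definition slots i J : nat := `|numq (r i J * frame_len%:R)|%N.

Lemma copiesE S : lam S * frame_len%:R = (copies S)%:R.
Proof.
have [lam_ge0 _ _ _] := lam_r; apply: mulq_dvd_denq => //.
by rewrite dvdn_mulr // (dvdn_prod_factor (fun S => `|denq (lam S)|%N)).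
Qed.

Lemma slotsE i J : J != set0 -> r i J * frame_len%:R = (slots i J)%:R.
Proof.
move=> J0; apply: mulq_dvd_denq; first exact: r_ge0.
by rewrite dvdn_mull // (dvdn_prod_factor (fun v => `|denq (r v.1 v.2)|%N) (i, J)).
Qed.

Definition frame_sets : seq {set subflow} :=
  flatten [seq nseq (copies X) X | X <- index_enum {set subflow}].

Lemma count_frame_sets (P : pred {set subflow}) :
  (count P frame_sets)%:R = \sum_S (P S)%:R * lam S * frame_len%:R :> rat.
Proof.
transitivity ((\sum_S P S * copies S)%N%:R : rat).
  congr (_%:R); rewrite /frame_sets; elim: (index_enum _) => [|S s IH].
    by rewrite big_nil.
  by rewrite big_cons /= count_cat count_nseq IH.
by rewrite natr_sum; apply: eq_bigr => S _; rewrite natrM -copiesE mulrA.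
Qed.

Lemma size_frame_sets : size frame_sets = frame_len.
Proof.
have [_ _ sum_lam _] := lam_r.
apply/eqP; rewrite -(eqr_nat rat) -count_predT count_frame_sets.
under eq_bigr do rewrite mul1r.
by rewrite -mulr_suml sum_lam mul1r.
Qed.

Lemma stable_frame_sets l : (l < frame_len)%N -> stable (nth set0 frame_sets l).
Proof.
move=> l_lt; set S := nth set0 frame_sets l.
have [_ lam_stable _ _] := lam_r; apply: lam_stable.
have : (0 < count (pred1 S) frame_sets)%N.
  by rewrite -has_count has_pred1 mem_nth // size_frame_sets.
rewrite -(ltr_nat rat) count_frame_sets (bigD1 S) //= eqxx mul1r big1 => [|S' /negbTE ->];
  last by rewrite !mul0r.
by rewrite addr0; apply: contraTneq => ->; rewrite mul0r ltxx.
Qed.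

Definition config_of_set (S : {set subflow}) : config K N := fun i =>
  if [pick v in S | v.1.1 == i] is Some v
  then Some (v.1.2, [set j | (i, v.1.2, j) \in S]) else None.

Lemma recv_config_of_set (S : {set subflow}) i J j : stable S ->
  (if config_of_set S i is Some (J', T) then (J' == J) && (j \in T) else false)
  = ((i, J, j) \in S).
Proof.
move=> /stableP[_ S_indep]; rewrite /config_of_set.
case: pickP => [[[i0 J0] j0] /andP[vS /eqP /= <-]|none]; last first.
  by have := none (i, J, j); rewrite /= eqxx andbT => ->.
rewrite /= inE; have [<-|neJ] //= := eqVneq J0 J.
apply/esym/negP => wS; have := S_indep _ _ vS wS.
by rewrite /adjacent eqxx (negbTE neJ) /= orbT andbT => /negPn /eqP[eJ _]; rewrite eJ eqxx in neJ.
Qed.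

Lemma valid_config_of_set S : stable S -> valid_config (config_of_set S).
Proof.
move=> /stableP[S_sub S_indep]; split.
  move=> i J T; rewrite /config_of_set.
  case: pickP => // -[[i0 J0] j0] /andP[vS /eqP /= <-] [<- <-].
  have /andP[J0n _] := S_sub _ vS; split=> //.
  by apply/subsetP => j; rewrite inE => /S_sub /andP[].
move=> i i' J T J' T' ne; rewrite /config_of_set.
case: pickP => // -[[i0 J0] j0] _ [_ <-].
case: pickP => // -[[i1 J1] j1] _ [_ <-].
apply/pred0P => j /=; rewrite !inE; apply/negP => /andP[vjS wjS].
have := S_indep _ _ vjS wjS; rewrite /adjacent eqxx /= andbT => /negPn /eqP[eii' _].
by rewrite eii' eqxx in ne.
Qed.

Definition frame_sched (l : nat) : config K N := config_of_set (nth set0 frame_sets l).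

Lemma valid_frame_sched l : (l < frame_len)%N -> valid_config (frame_sched l).
Proof. by move=> l_lt; apply/valid_config_of_set/stable_frame_sets. Qed.

Lemma count_recv_frame_sched i J j : J != set0 -> j \in J ->
  count (recv frame_len frame_sched i J j) (iota 0 frame_len) = slots i J.
Proof.
move=> J0 jJ.
have -> : count (recv frame_len frame_sched i J j) (iota 0 frame_len) =
          count (fun S : {set subflow} => (i, J, j) \in S) frame_sets.
  rewrite -{1}(mkseq_nth set0 frame_sets) size_frame_sets /mkseq count_map.
  apply: eq_in_count => l; rewrite mem_iota add0n => /andP[_ l_lt] /=.
  by rewrite /recv /slot_cfg modn_small // recv_config_of_set // stable_frame_sets.
have [_ _ _ lam_marg] := lam_r.
apply/eqP; rewrite -(eqr_nat rat) count_frame_sets -slotsE //.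
have := lam_marg (i, J, j); rewrite /is_subflow J0 jJ /= => /(_ isT) ->.
rewrite -mulr_suml; apply/eqP; congr (_ * _).
by apply: eq_bigr => S _; rewrite mulrC.
Qed.

End FrameFromWeights.

Lemma vandermonde_delta_span (Fld : fieldType) (P : nat) (x : 'I_P -> Fld) :
  injective x -> forall k : 'I_P,
  exists c : 'I_P -> Fld, forall m : 'I_P, \sum_y c y * x y ^+ m = (m == k)%:R.
Proof.
move=> x_inj k; pose M := Vandermonde P (\row_y x y).
have M_unit : M \in unitmx.
  rewrite unitmxE det_Vandermonde unitfE.
  apply/prodf_neq0 => y _; apply/prodf_neq0 => z lt_yz; rewrite !mxE subr_eq0.
  by apply: contraTneq lt_yz => /x_inj ->; rewrite ltnn.
exists (fun y => invmx M y k) => m.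
have /matrixP/(_ m k) := mulmxV M_unit; rewrite !mxE => <-.
by apply: eq_bigr => y _; rewrite !mxE mulrC.
Qed.

Lemma seq_vandermonde_delta_span (Fld : fieldType) (sel : seq nat)
    (x : 'I_(size sel) -> Fld) k :
  injective x -> k \in sel ->
  exists c : 'I_(size sel) -> Fld, forall m,
    \sum_y c y * (if m \in sel then x y ^+ index m sel else 0) = (m == k)%:R.
Proof.
move=> x_inj k_sel; have k_idx : (index k sel < size sel)%N by rewrite index_mem.
have [c c_delta] := vandermonde_delta_span x_inj (Ordinal k_idx).
exists c => m; have [m_sel|m_nsel] := boolP (m \in sel); last first.
  rewrite big1 => [|y _]; last by rewrite mulr0.
  by have -> : (m == k) = false by apply: contraNF m_nsel => /eqP ->.
have m_idx : (index m sel < size sel)%N by rewrite index_mem.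
rewrite (c_delta (Ordinal m_idx)); congr (nat_of_bool _)%:R.
apply/idP/idP => [/eqP/(congr1 val) /= mk|/eqP mk]; apply/eqP.
  by rewrite -(nth_index 0%N m_sel) mk nth_index.
by apply: val_inj; rewrite /= mk.
Qed.

Lemma sum_mul_delta (R : pzSemiRingType) (s : seq nat) (P : pred nat) (f : nat -> R) m :
  uniq s -> \sum_(x <- s | P x) f x * (m == x)%:R = if (m \in s) && P m then f m else 0.
Proof.
elim: s => [|x s IH] /=; first by rewrite big_nil.
move=> /andP[xs us]; rewrite big_cons IH // in_cons.
have [->|nmx] /= := eqVneq m x.
  by rewrite (negbTE xs) /=; case: (P x); rewrite ?mulr1 ?addr0.
by case: (P x); rewrite ?mulr0 ?add0r.
Qed.

Lemma cumA_ext K N (a a' : arrivals K N) i J t :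
  (forall i J s, (s < t)%N -> a i J s = a' i J s) -> cumA a i J t = cumA a' i J t.
Proof. by move=> aa'; apply: eq_bigr => s _; rewrite aa'. Qed.

Lemma leq_cumA K N (a : arrivals K N) i J t t' :
  (t <= t')%N -> (cumA a i J t <= cumA a i J t')%N.
Proof.
move/subnK <-; elim: (t' - t)%N => [|d IH]; rewrite ?add0n //.
by rewrite addSn /cumA big_ord_recr /=; exact: leq_trans IH (leq_addr _ _).
Qed.

Section FrameCode.
Variables (K N F : nat) (sched : nat -> config K N) (Fld : finFieldType).
Variables (R : 'I_K -> {set 'I_N} -> nat) (alpha : nat -> Fld).

Definition selected (cd : coding K N Fld) (a : arrivals K N) i J t0 : seq nat :=
  take (R i J) [seq k <- iota 0 (cumA a i J t0) | asbool (present F sched cd a i J k t0)].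

Definition code_step (cd : coding K N Fld) (a : arrivals K N) (s : nat) (i : 'I_K) (m : nat) :
    Fld :=
  if slot_cfg F sched s i is Some (J, T) then
    let sel := selected cd a i J (s %/ F * F) in
    if (m \in sel) && asbool (present F sched cd a i J m s)
    then alpha (s %% F) ^+ index m sel else 0
  else 0.

(* Through [present], the code of slot [s] depends on the code of earlier
   slots; [code_prefix a n] builds slots [0 .. n-1] in order. *)
Fixpoint code_prefix (a : arrivals K N) (n : nat) : nat -> 'I_K -> nat -> Fld :=
  if n is n'.+1 then fun s =>
    if (s < n')%N then code_prefix a n' s
    else if s == n' then code_step (fun _ => code_prefix a n') a n' else fun _ _ => 0
  else fun _ _ _ => 0.

Definition frame_code : coding K N Fld := fun a s => code_prefix a s.+1 s.

Lemma code_prefixE a n s : (s < n)%N -> code_prefix a n s = frame_code a s.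
Proof.
elim: n => // n IH; rewrite ltnS leq_eqVlt => /orP[/eqP -> //|lt_sn].
by rewrite /= lt_sn IH.
Qed.

Lemma present_ext (cd cd' : coding K N Fld) (a a' : arrivals K N) i J k t :
  (forall s, (s < t)%N -> forall i m, cd a s i m = cd' a' s i m) ->
  (forall i J s, (s < t)%N -> a i J s = a' i J s) ->
  present F sched cd a i J k t <-> present F sched cd' a' i J k t.
Proof.
move=> cdE aE; rewrite /present (cumA_ext _ _ aE).
suff -> : served F sched cd a i J k t <-> served F sched cd' a' i J k t by [].
by split=> sv j jJ; have [w hw] := sv j jJ; exists w => m; rewrite -hw;
  apply: eq_bigr => s _; rewrite cdE.
Qed.

Lemma code_step_ext (cd cd' : coding K N Fld) (a a' : arrivals K N) s :
  (forall s', (s' < s)%N -> forall i m, cd a s' i m = cd' a' s' i m) ->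
  (forall i J s', (s' < s)%N -> a i J s' = a' i J s') ->
  forall i m, code_step cd a s i m = code_step cd' a' s i m.
Proof.
move=> cdE aE i m; rewrite /code_step; case: (slot_cfg F sched s i) => [[J T]|] //.
have le_t0s : (s %/ F * F <= s)%N by rewrite leq_trunc_div.
have cdE0 s' : (s' < s %/ F * F)%N -> forall i m, cd a s' i m = cd' a' s' i m.
  by move=> lt_s'; apply/cdE/(leq_trans lt_s').
have aE0 i' J' s' : (s' < s %/ F * F)%N -> a i' J' s' = a' i' J' s'.
  by move=> lt_s'; apply/aE/(leq_trans lt_s').
have -> : selected cd a i J (s %/ F * F) = selected cd' a' i J (s %/ F * F).
  rewrite /selected (cumA_ext _ _ aE0); congr take; apply: eq_filter => k.
  exact/eq_asbool/present_ext.
by rewrite (eq_asbool (present_ext i J m cdE aE)).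
Qed.

Lemma frame_codeE a s i m : frame_code a s i m = code_step frame_code a s i m.
Proof.
rewrite /frame_code /= ltnn eqxx; apply: code_step_ext => // s' lt_s' i' m'.
by rewrite code_prefixE.
Qed.

Lemma code_prefix_ext n (a a' : arrivals K N) :
  (forall i J s, (s < n)%N -> a i J s = a' i J s) ->
  forall s i m, code_prefix a n.+1 s i m = code_prefix a' n.+1 s i m.
Proof.
elim: n => [|n IH] in a a' * => aE s i m /=.
  by case: ifP => // _; apply: code_step_ext.
have {}IH := IH a a' (fun i J s lt_sn => aE i J s (ltnW lt_sn)).
case: ifP => _; first exact: IH.
by case: ifP => // _; apply: code_step_ext => // s' _ i' m'; apply: IH.
Qed.

Lemma frame_code_causal : causal frame_code.
Proof.
move=> a a' s aE; apply: functional_extensionality => i.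
by apply: functional_extensionality => m; apply: code_prefix_ext.
Qed.

Lemma frame_code_valid a : valid_coding F sched frame_code a.
Proof.
move=> s i J T cfg m; rewrite frame_codeE /code_step cfg.
by case: ifP => [/andP[_ /asboolP]|] //; rewrite eqxx.
Qed.

Lemma mem_selected cd a i J t0 k (older : seq nat) : uniq older ->
  (forall k', k' \in older <-> (k' < k)%N /\ present F sched cd a i J k' t0) ->
  present F sched cd a i J k t0 -> (size older < R i J)%N ->
  k \in selected cd a i J t0.
Proof.
move=> u_older older_k pk lt_older; have [lt_kc _] := pk; rewrite /selected.
set p := fun k' => asbool (present F sched cd a i J k' t0).
have -> : iota 0 (cumA a i J t0) = iota 0 k ++ k :: iota k.+1 (cumA a i J t0 - k.+1).
  by rewrite -{1}(subnKC (ltnW lt_kc)) iotaD add0n -(subnSK lt_kc).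
have size_older : size (filter p (iota 0 k)) = size older.
  apply/perm_size/uniq_perm; rewrite ?filter_uniq ?iota_uniq // => k'.
  rewrite mem_filter mem_iota add0n /=; apply/idP/idP.
    by move=> /andP[/asboolP pk' lt_k'k]; apply/older_k.
  by move=> /older_k[lt_k'k pk']; apply/andP; split=> //; apply/asboolP.
have pk_sel : p k by apply/asboolP.
rewrite filter_cat /= pk_sel take_cat size_older ltnNge.
rewrite (ltnW (leq_trans _ lt_older)) //= mem_cat.
have : (0 < R i J - size older)%N by rewrite subn_gt0.
by case: (R i J - size older)%N => // x _ /=; rewrite in_cons eqxx orbT.
Qed.

End FrameCode.

Section FrameDecoding.
Variables (K N F : nat) (sched : nat -> config K N) (Fld : finFieldType).
Variables (R : 'I_K -> {set 'I_N} -> nat) (alpha : nat -> Fld).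
Hypotheses (F_gt0 : (0 < F)%N) (sched_valid : forall l, (l < F)%N -> valid_config (sched l)).
Local Notation code := (frame_code F sched R alpha).
Local Notation selected := (selected F sched R).

Lemma frame_slotE n l : (0 < n)%N -> (l < F)%N ->
  ((n.-1 * F + l) %/ F * F = n.-1 * F)%N /\ ((n.-1 * F + l) %% F = l)%N.
Proof.
by move=> n_gt0 lt_lF; rewrite divnMDl // divn_small // addn0 modnMDl modn_small.
Qed.

(* The packet slot [l] of a frame would carry if no selected packet were served. *)
Definition frame_row a i J t0 l (m : nat) : Fld :=
  let sel := selected code a i J t0 in
  if m \in sel then alpha l ^+ index m sel else 0.

(* The coded packet of slot [l] differs from [frame_row] by packets that are
   already served, hence already decodable. *)
Lemma received_span_frame_row a n i J j l : (0 < n)%N -> (l < F)%N ->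
  recv F sched i J j (n.-1 * F + l) ->
  received_span F sched code a i J j (n * F) (frame_row a i J (n.-1 * F) l).
Proof.
move=> n_gt0 lt_lF rs; set s := (n.-1 * F + l)%N.
set sel := selected code a i J (n.-1 * F).
have [t0E slE] := frame_slotE n_gt0 lt_lF.
have lt_s : (s < n * F)%N by rewrite /s -[in (n * F)%N](prednK n_gt0) mulSnr ltn_add2l.
have u_sel : uniq sel by rewrite take_uniq // filter_uniq // iota_uniq.
move: (rs); rewrite /recv; case cfg: (slot_cfg F sched s i) => [[J' T]|] //.
move=> /andP[/eqP eJ' jT]; subst J'.
have jJ : j \in J.
  move: cfg; rewrite /slot_cfg slE => cfg.
  by have [_ /subsetP] := (sched_valid lt_lF).1 _ _ _ cfg; apply.
pose served_part x m := alpha l ^+ index x sel * (m == x)%:R.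
pose gone x := ~~ asbool (present F sched code a i J x s).
apply: received_span_ext
  (received_spanD (received_span_code code a lt_s rs)
    (received_span_sum (xs := sel) (P := gone) (f := served_part) _)).
  move=> m; rewrite frame_codeE /code_step cfg t0E slE -/sel /served_part.
  rewrite sum_mul_delta // /frame_row -/sel.
  by rewrite /gone; case: (m \in sel); case: (asbool _); rewrite /= ?addr0 ?add0r.
move=> x x_sel /asboolP x_gone; apply: received_spanZ.
have lt_xc : (x < cumA a i J s)%N.
  apply: leq_trans (leq_cumA a i J (leq_addr l _)).
  by move: x_sel => /mem_take; rewrite mem_filter mem_iota => /andP[_ /andP[_]].
have [sv|nsv] := asboolP (served F sched code a i J x s); last by case: x_gone; split.
exact: received_span_le (ltnW lt_s) (sv j jJ).
Qed.

Lemma frame_code_guarantee (r : 'I_K -> {set 'I_N} -> rat) :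
  (forall i J, J != set0 -> r i J * F%:R = (R i J)%:R) ->
  (forall i J j, J != set0 -> j \in J -> (R i J <= count (recv F sched i J j) (iota 0 F))%N) ->
  (forall l l', (l < F)%N -> (l' < F)%N -> alpha l = alpha l' -> l = l') ->
  forall a, frame_guarantee F sched code a r.
Proof.
move=> rR R_le alpha_inj a n i J n_gt0 J0 k older u_older older_k pk lt_older j jJ.
have k_sel : k \in selected code a i J (n.-1 * F).
  by apply: mem_selected u_older older_k pk _; rewrite -(ltr_nat rat) -rR.
set sel := selected code a i J (n.-1 * F) in k_sel *.
pose ls := [seq l <- iota 0 F | recv F sched i J j l].
have size_ls : (size sel <= size ls)%N.
  rewrite size_filter (leq_trans _ (R_le _ _ _ J0 jJ)) // size_take.
  by case: ltnP => // /ltnW.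
have ls_slot y : (y < size ls)%N -> (nth 0%N ls y < F)%N /\ recv F sched i J j (nth 0%N ls y).
  by move=> y_lt; move: (mem_nth 0%N y_lt); rewrite mem_filter mem_iota => /andP[-> /andP[]].
pose x (y : 'I_(size sel)) := alpha (nth 0%N ls y).
have x_inj : injective x.
  move=> y z /alpha_inj; have yl := leq_trans (ltn_ord y) size_ls.
  have zl := leq_trans (ltn_ord z) size_ls.
  move=> /(_ (ls_slot _ yl).1 (ls_slot _ zl).1) /eqP.
  by rewrite nth_uniq ?filter_uniq ?iota_uniq // => /eqP/val_inj.
have [c c_delta] := seq_vandermonde_delta_span x_inj k_sel.
apply: received_span_ext
  (received_span_sum (xs := index_enum 'I_(size sel)) (P := xpredT)
    (f := fun y m => c y * frame_row a i J (n.-1 * F) (nth 0%N ls y) m) _).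
  exact: c_delta.
move=> y _ _; apply: received_spanZ.
have [lt_yF rs] := ls_slot _ (leq_trans (ltn_ord y) size_ls).
by apply: received_span_frame_row; rewrite // recv_modn (frame_slotE n_gt0 lt_yF).2.
Qed.

End FrameDecoding.

Lemma Fp_natr_inj (p l l' : nat) : prime p -> (l < p)%N -> (l' < p)%N ->
  (l%:R : 'F_p) = l'%:R -> l = l'.
Proof.
by move=> p_prime lt_lp lt_l'p /(congr1 val); rewrite /= !val_Fp_nat // !modn_small.
Qed.

Theorem theorem6 (K N : nat) (r : 'I_K -> {set 'I_N} -> rat)
    (r_ge0 : forall i J, J != set0 -> 0 <= r i J) :
  in_STAB (enhanced r) <->
  exists (F : nat) (sched : nat -> config K N) (Fld : finFieldType)
         (code : coding K N Fld),
    [/\ (0 < F)%N,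
        forall s, (s < F)%N -> valid_config (sched s),
        causal code,
        forall i J, J != set0 -> exists b : nat, r i J * F%:R = b%:R
      & forall a : arrivals K N,
          valid_coding F sched code a /\ frame_guarantee F sched code a r].
Proof.
split=> [[lam lam_r]|[F [sched [Fld [code [F_gt0 sched_valid _ r_int frame_ok]]]]]];
  last exact: frame_schedule_in_STAB F_gt0 sched_valid (fun a => (frame_ok a).2) r_ge0 r_int.
have F_gt0 := frame_len_gt0 r lam; set F := frame_len r lam in F_gt0 *.
have [p lt_Fp p_prime] := prime_above F.
pose alpha l : 'F_p := l%:R.
have alpha_inj l l' : (l < F)%N -> (l' < F)%N -> alpha l = alpha l' -> l = l'.
  by move=> lt_lF lt_l'F; apply: Fp_natr_inj; rewrite ?(ltn_trans _ lt_Fp).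
have sched_valid := valid_frame_sched lam_r.
exists F, (frame_sched r lam), 'F_p, (frame_code F (frame_sched r lam) (slots r lam) alpha).
split.
- exact: F_gt0.
- exact: sched_valid.
- exact: frame_code_causal.
- by move=> i J J0; exists (slots r lam i J); exact: slotsE.
- move=> a; split; first exact: frame_code_valid.
  apply: (frame_code_guarantee F_gt0 sched_valid _ _ alpha_inj).
    by move=> i J; exact: slotsE.
  by move=> i J j J0 jJ; rewrite count_recv_frame_sched.
Qed.
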